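(* The complex $\mathcal{M}(\partial\Delta^2)$ is the $1$-skeleton of a triangular prism (a graph with $6$ vertices and $9$ edges), so $\mathcal{M}(\partial\Delta^2)\simeq\bigvee^4S^1$; moreover $\mathcal{M}(\Delta^2)$ collapses simplicially onto its subcomplex $\mathcal{M}(\partial\Delta^2)$, hence $\mathcal{M}(\Delta^2)\simeq\bigvee^4S^1$.
   Context: All simplicial complexes are finite abstract simplicial complexes; simplices are nonempty. $\Delta^n$ is the simplicial complex of all nonempty subsets of an $(n+1)$-element vertex set, and $\partial\Delta^n$ the subcomplex of proper nonempty subsets. The Hasse diagram $\mathcal{H}(K)$ of $K$ is the directed graph whose vertices are the simplices of $K$, with an edge $\sigma\to\tau$ whenever $\sigma\subsetneq\tau$ and $\dim\tau=\dim\sigma+1$. A matching on $\mathcal{H}(K)$ is a set $W$ of edges of $\mathcal{H}(K)$, no two sharing a vertex; an edge in $W$ is called a pair. $W$ is acyclic if the directed graph obtained from $\mathcal{H}(K)$ by reversing every edge in $W$ has no directed cycle. The complex of discrete Morse matchings $\mathcal{M}(K)$ is the simplicial complex whose vertices are the edges of $\mathcal{H}(K)$ and whose simplices are the nonempty acyclic matchings on $\mathcal{H}(K)$; $\mathcal{M}(\partial\Delta^2)$ is regarded as a subcomplex of $\mathcal{M}(\Delta^2)$ via the map sending each pair to itself. *)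

From mathcomp Require Import all_boot.
Set Implicit Arguments. Unset Strict Implicit. Unset Printing Implicit Defensive.

Section SimplicialDefs.
Variable V : finType.

Definition simplicial_complex (K : {set {set V}}) : bool :=
  (set0 \notin K) &&
  [forall s in K, forall t : {set V}, (t != set0) && (t \subset s) ==> (t \in K)].

Definition hasse (K : {set {set V}}) (s t : {set V}) : bool :=
  [&& s \in K, t \in K, s \proper t & #|t| == #|s|.+1].

Definition hedge := ({set V} * {set V})%type.

Definition matching (K : {set {set V}}) (W : {set hedge}) : bool :=
  [forall e in W, hasse K e.1 e.2] &&
  [forall e1 in W, forall e2 in W,
     (e1 != e2) ==> [disjoint [set e1.1; e1.2] & [set e2.1; e2.2]]].

Definition reversed_rel (K : {set {set V}}) (W : {set hedge}) : rel {set V} :=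
  fun s t => (hasse K s t && ((s, t) \notin W)) || ((t, s) \in W).

Definition has_dicycle (T : finType) (r : rel T) : bool :=
  [exists x, exists y, r x y && connect r y x].

Definition acyclic_matching (K : {set {set V}}) (W : {set hedge}) : bool :=
  matching K W && ~~ has_dicycle (reversed_rel K W).

(* The complex of discrete Morse matchings M(K); its vertex type is the type
   of (potential) Hasse edges, and its simplices are the nonempty acyclic
   matchings. *)
Definition morse_complex (K : {set {set V}}) : {set {set hedge}} :=
  [set W : {set hedge} | (W != set0) && acyclic_matching K W].

Definition elementary_collapse (K L : {set {set V}}) : Prop :=
  exists s t : {set V},
    [/\ s \in K, t \in K, s \proper t & #|t| = #|s|.+1] /\
    (forall r, r \in K -> s \proper r -> r = t) /\
    L = K :\ s :\ t.

Inductive collapses : {set {set V}} -> {set {set V}} -> Prop :=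
  | collapses_refl K : collapses K K
  | collapses_step K K' L : elementary_collapse K K' -> collapses K' L -> collapses K L.

End SimplicialDefs.

Definition Delta2 : {set {set 'I_3}} := [set s : {set 'I_3} | s != set0].
Definition bDelta2 : {set {set 'I_3}} :=
  [set s : {set 'I_3} | (s != set0) && (s != setT)].

(* The 1-skeleton of the triangular prism, on vertex set 'I_3 * bool:
   two triangles (fixed bool coordinate) joined by the three vertical edges
   (fixed 'I_3 coordinate). 6 vertices, 9 edges. *)
Definition prism_edge (x y : 'I_3 * bool) : bool :=
  (x != y) && ((x.1 == y.1) || (x.2 == y.2)).
Definition prism1 : {set {set ('I_3 * bool)}} :=
  [set s : {set ('I_3 * bool)} |
     [exists x, s == [set x]] || [exists x, exists y, prism_edge x y && (s == [set x; y])]].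

Definition simplicial_iso (U W : finType) (K : {set {set U}}) (L : {set {set W}}) : Prop :=
  exists f : U -> W, injective f /\ L = [set f @: (s : {set U}) | s in K].

From mathcomp Require Import all_boot.
Set Implicit Arguments. Unset Strict Implicit. Unset Printing Implicit Defensive.

(** The Hasse diagram of the boundary of a triangle is a hexagon, its three vertices
   alternating with its three edges. A matching on it is a set of pairwise disjoint hexagon
   edges; reversing one of the two perfect matchings turns the hexagon into a directed cycle,
   while every other matching stays acyclic. Hence two Hasse edges span a simplex of
   M(∂Δ^2) exactly when they are not adjacent on the hexagon, and the complement of a
   6-cycle is the 1-skeleton of the triangular prism. M(Δ^2) has 24 further simplices, the
   acyclic matchings using one of the three pairs (edge, triangle); they are removed by
   twelve elementary collapses.

   Everything is finite, and the verification is computational: simplices are coded by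
   increasing lists of vertices, matchings by sublists of the list of Hasse edges,
   acyclicity is certified either by a rank decreasing along every arrow or by an explicit
   closed walk, and the collapses are found by a greedy search whose outcome is checked. *)

Fixpoint subseqs (T : Type) (s : seq T) : seq (seq T) :=
  if s is x :: s' then [seq x :: w | w <- subseqs s'] ++ subseqs s' else [:: [::]].

Section Subseqs.
Variable T : eqType.
Implicit Types s w : seq T.

Lemma mem_subseqs s w : (w \in subseqs s) = subseq w s.
Proof.
elim: s w => [|x s IHs] [|y w] //=; rewrite mem_cat IHs ?sub0seq ?orbT //.
case: eqP => [<- | ne_yx]; last by case: mapP => // -[w' _ [/ne_yx]].
rewrite mem_map ?IHs; last exact: (can_inj (g := behead)).
by rewrite orb_idr // => /cons_subseq.
Qed.

Lemma subseqs_uniq s : uniq s -> uniq (subseqs s).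
Proof.
elim: s => [//|x s IHs] /= /andP[xNs /IHs uniq_s]; rewrite cat_uniq.
rewrite map_inj_uniq => [|w w' [//]]; rewrite uniq_s andbT.
apply/hasP => -[_ /[swap] /mapP[w _ ->]]; rewrite mem_subseqs => /mem_subseq.
by move=> /(_ x); rewrite inE eqxx (negPf xNs) => /(_ isT).
Qed.

Lemma subseq_uniq_eq s w (w' : seq T) :
  uniq s -> subseq w s -> subseq w' s -> w =i w' -> w = w'.
Proof.
move=> uniq_s sub_w sub_w' eq_ww'.
rewrite (subseq_uniqP uniq_s sub_w) (subseq_uniqP uniq_s sub_w').
exact: eq_filter.
Qed.
End Subseqs.

(* A subset of ['I_n] is coded by the increasing list of its elements; [set_of_seq] is a
   bijection from [iota_subseqs n] onto [{set 'I_n}]. *)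
Section SetOfSeq.
Variable n : nat.
Implicit Types (x y : seq nat) (A : {set 'I_n}).

Definition set_of_seq x : {set 'I_n} := [set i : 'I_n | val i \in x].
Definition seq_of_set A : seq nat := [seq val i | i <- enum A].
Definition iota_subseqs : seq (seq nat) := subseqs (iota 0 n).

Lemma seq_of_setK : cancel seq_of_set set_of_seq.
Proof. by move=> A; apply/setP => i; rewrite inE mem_map ?mem_enum //; apply: val_inj. Qed.

Lemma seq_of_set_subseqs A : seq_of_set A \in iota_subseqs.
Proof.
rewrite mem_subseqs -val_enum_ord; apply: map_subseq.
by rewrite enumT; apply: filter_subseq.
Qed.

Lemma set_of_seq_inj : {in iota_subseqs &, injective set_of_seq}.
Proof.
move=> x y; rewrite !mem_subseqs => sub_x sub_y /setP eq_xy.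
have mem_xy k : (k \in x) = (k \in y).
  case: (ltnP k n) => [lt_kn | le_nk]; first by have := eq_xy (Ordinal lt_kn); rewrite !inE.
  have out_iota : k \notin iota 0 n by rewrite mem_iota ltnNge le_nk andbF.
  have notin z : subseq z (iota 0 n) -> (k \in z) = false.
    by move=> sub_z; apply: contraNF out_iota; apply: mem_subseq.
  by rewrite !notin.
exact: subseq_uniq_eq (iota_uniq 0 n) sub_x sub_y mem_xy.
Qed.

Lemma set_of_seqK : {in iota_subseqs, cancel set_of_seq seq_of_set}.
Proof. by move=> x x_in; apply: set_of_seq_inj; rewrite ?seq_of_set_subseqs ?seq_of_setK. Qed.

Lemma subset_set_of_seq x y : x \in iota_subseqs ->
  (set_of_seq x \subset set_of_seq y) = all (mem y) x.
Proof.
rewrite mem_subseqs => /mem_subseq sub_x; apply/subsetP/allP => [sub_xy k x_k | sub_xy i].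
  have : k < n by have := sub_x k x_k; rewrite mem_iota.
  by move=> lt_kn; have := sub_xy (Ordinal lt_kn); rewrite !inE /=; apply.
by rewrite !inE; apply: sub_xy.
Qed.

Lemma card_set_of_seq x : x \in iota_subseqs -> #|set_of_seq x| = size x.
Proof. by move=> x_in; rewrite cardE -(size_map val) -{2}(set_of_seqK x_in). Qed.

Lemma set_of_seq_nil : set_of_seq [::] = set0.
Proof. by apply/setP => i; rewrite !inE. Qed.

Lemma set_of_seq_iota : set_of_seq (iota 0 n) = setT.
Proof. by apply/setP => i; rewrite !inE mem_iota add0n ltn_ord. Qed.

Lemma nil_iota_subseqs : [::] \in iota_subseqs.
Proof. by rewrite mem_subseqs sub0seq. Qed.

Lemma iota_iota_subseqs : iota 0 n \in iota_subseqs.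
Proof. by rewrite mem_subseqs subseq_refl. Qed.
End SetOfSeq.

(** * Certified acyclicity *)

Lemma acyclic_of_rank (T : finType) (r : rel T) (rank : T -> nat) :
  (forall x y, r x y -> rank y < rank x) -> ~~ has_dicycle r.
Proof.
move=> rank_r; have rank_path x p : path r x p -> rank (last x p) <= rank x.
  elim: p x => //= y p IHp x /andP[r_xy /IHp le_y].
  exact: leq_trans le_y (ltnW (rank_r _ _ r_xy)).
apply/existsP => -[x /existsP[y /andP[r_xy /connectP[p p_path x_last]]]].
by have := rank_path _ _ p_path; rewrite -x_last leqNgt rank_r.
Qed.

Section Reach.
Variables (U : eqType) (r : rel U) (vs : seq U).

(* The [let] shares the previous layer; without it evaluation is exponential in [k]. *)
Fixpoint reach k x : seq U :=
  if k is k'.+1 then let R := reach k' x in [seq z <- vs | (z == x) || has (r^~ z) R]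
  else [:: x].

(* When [r] is acyclic, [r x y] makes the set reachable from [y] a proper subset of the one
   reachable from [x], so [rank_decreasing] holds; only the converse is proved below. *)
Definition reach_rank x := size (reach (size vs) x).

Definition rank_decreasing : bool :=
  let ranked := [seq (x, reach_rank x) | x <- vs] in
  all (fun p => all (fun q => r p.1 q.1 ==> (q.2 < p.2)) ranked) ranked.

Definition cycle_witnessed : bool :=
  has (fun y => let R := reach (size vs) y in has (fun x => r x y && (x \in R)) vs) vs.

Lemma reach_sub k x : x \in vs -> {subset reach k x <= vs}.
Proof.
case: k => [|k] x_vs y /=; first by rewrite inE => /eqP ->.
by rewrite mem_filter => /andP[].
Qed.

Section Transfer.
Variables (T : finType) (R : rel T) (enc : U -> T) (dec : T -> U).
Hypotheses (dec_vs : forall X, dec X \in vs) (decK : cancel dec enc).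
Hypothesis RE : {in vs &, forall x y, R (enc x) (enc y) = r x y}.

Lemma connect_reach k x y : x \in vs -> y \in reach k x -> connect R (enc x) (enc y).
Proof.
move=> x_vs; elim: k y => [|k IHk] y /=; first by rewrite inE => /eqP ->.
rewrite mem_filter => /andP[/orP[/eqP -> // | /hasP[z z_reach r_zy]] y_vs].
apply: connect_trans (IHk z z_reach) (connect1 _).
by rewrite RE ?(reach_sub x_vs z_reach).
Qed.

Lemma dicycle_of_witness : cycle_witnessed -> has_dicycle R.
Proof.
case/hasP => y y_vs /hasP[x x_vs /andP[r_xy x_reach]].
apply/existsP; exists (enc x); apply/existsP; exists (enc y).
by rewrite RE // r_xy (connect_reach y_vs x_reach).
Qed.

Lemma acyclic_of_rank_decreasing : rank_decreasing -> ~~ has_dicycle R.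
Proof.
move=> ok; apply: (@acyclic_of_rank _ _ (reach_rank \o dec)) => X Y R_XY.
have ranked x : x \in vs -> (x, reach_rank x) \in [seq (x, reach_rank x) | x <- vs].
  exact: map_f.
have := allP (allP ok _ (ranked _ (dec_vs X))) _ (ranked _ (dec_vs Y)).
by rewrite /= -RE ?dec_vs // !decK R_XY.
Qed.

Lemma acyclic_rankE : rank_decreasing || cycle_witnessed -> ~~ has_dicycle R = rank_decreasing.
Proof.
by case: (boolP rank_decreasing) => [/acyclic_of_rank_decreasing -> | _ /dicycle_of_witness ->].
Qed.
End Transfer.
End Reach.

Lemma imset_set_seq (T U : finType) (g : T -> U) (s : seq T) : g @: [set:: s] = [set:: map g s].
Proof.
apply/setP => y; rewrite inE; apply/imsetP/mapP => -[x]; rewrite ?inE => x_s ->.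
  by exists x.
by exists x; rewrite ?inE.
Qed.

Section ImageSets.
Variables (E : eqType) (V : finType) (f : E -> V) (es : seq E).
Hypotheses (es_uniq : uniq es) (f_inj : {in es &, injective f}).
Implicit Types (w s t : seq E) (cx : seq (seq E)).

Definition image_set w : {set V} := [set:: map f w].

Definition complex_of cx : {set {set V}} := [set:: map image_set cx].

Lemma image_set_f w e : e \in w -> f e \in image_set w.
Proof. by move=> e_w; rewrite inE map_f. Qed.

Lemma mem_complex_of cx X : (X \in complex_of cx) = (X \in map image_set cx).
Proof. by rewrite inE. Qed.

Lemma subset_complex_of cx (cx' : seq (seq E)) :
  {subset cx <= cx'} -> complex_of cx \subset complex_of cx'.
Proof.
move=> sub_cx; apply/subsetP => X; rewrite !mem_complex_of => /mapP[w /sub_cx w_cx' ->].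
exact: map_f.
Qed.

Lemma subset_image_set w (w' : seq E) : subseq w es -> subseq w' es ->
  (image_set w \subset image_set w') = all (mem w') w.
Proof.
move=> /mem_subseq w_es /mem_subseq w'_es.
apply/subsetP/allP => [sub_ww' e e_w | sub_ww' X].
  have : f e \in image_set w' by apply/sub_ww'/image_set_f.
  rewrite inE => /mapP[e' e'_w' /f_inj eq_e].
  by rewrite (eq_e (w_es _ e_w) (w'_es _ e'_w')).
by rewrite !inE => /mapP[e e_w ->]; apply/map_f/sub_ww'.
Qed.

Lemma card_image_set w : subseq w es -> #|image_set w| = size w.
Proof.
move=> w_es; rewrite cardsE -(size_map f); apply/card_uniqP.
rewrite (map_inj_in_uniq (sub_in2 (mem_subseq w_es) f_inj)).
exact: subseq_uniq w_es es_uniq.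
Qed.

Lemma image_set_inj : {in subseqs es &, injective image_set}.
Proof.
move=> w w'; rewrite !mem_subseqs => w_es w'_es /eqP; rewrite eqEsubset.
rewrite !subset_image_set // => /andP[/allP sub_ww' /allP sub_w'w].
apply: subseq_uniq_eq es_uniq w_es w'_es _ => e.
by apply/idP/idP => [/sub_ww' | /sub_w'w].
Qed.

Lemma image_set_filter w : {subset w <= es} -> image_set [seq e <- es | e \in w] = image_set w.
Proof.
move=> w_es; apply/setP => X; rewrite !inE.
apply/mapP/mapP => -[e e_w ->]; exists e => //; move: e_w; rewrite mem_filter.
  by case/andP.
by move=> e_w; rewrite e_w w_es.
Qed.

Lemma eq_complex_of cx (cx' : seq (seq E)) : cx =i cx' -> complex_of cx = complex_of cx'.
Proof. by move=> /(eq_mem_map image_set) eq_cx; apply/setP => X; rewrite !inE eq_cx. Qed.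

Lemma complex_of_filter cx : (forall w, w \in cx -> {subset w <= es}) ->
  complex_of [seq [seq e <- es | e \in w] | w <- cx] = complex_of cx.
Proof.
move=> cx_es; rewrite /complex_of -map_comp (_ : map _ cx = map image_set cx) //.
by apply/eq_in_map => w /cx_es /image_set_filter.
Qed.

Definition free_pairb cx s t :=
  [&& s \in cx, t \in cx, all (mem t) s, size t == (size s).+1 &
      all (fun u : seq E => all (mem u) s ==> (u == s) || (u == t)) cx].

Definition remove_pair cx s t := [seq u <- cx | (u != s) && (u != t)].

Lemma elementary_collapse_free_pair cx s t : {subset cx <= subseqs es} ->
  free_pairb cx s t -> elementary_collapse (complex_of cx) (complex_of (remove_pair cx s t)).
Proof.
move=> cx_sub /and5P[s_cx t_cx sub_st /eqP size_t cofaces].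
have [s_es t_es] : subseq s es /\ subseq t es by rewrite -!mem_subseqs !cx_sub.
have card_t : #|image_set t| = #|image_set s|.+1 by rewrite !card_image_set.
have neq_image (u v : seq E) : u \in cx -> v \in cx -> (image_set u != image_set v) = (u != v).
  by move=> u_cx v_cx; rewrite (inj_in_eq image_set_inj) ?cx_sub.
exists (image_set s), (image_set t); split; [|split].
- by rewrite !inE !map_f // properEcard subset_image_set // sub_st card_t ltnSn.
- move=> X; rewrite inE => /mapP[u u_cx ->]; rewrite properE => /andP[sub_su not_sub_us].
  have u_es : subseq u es by rewrite -mem_subseqs cx_sub.
  move: (allP cofaces u u_cx) not_sub_us; rewrite -subset_image_set // sub_su /=.
  by case/orP => /eqP -> //; rewrite subxx.
- apply/setP => X; rewrite !inE.
  apply/mapP/and3P => [[u u_rem ->] | [X_t X_s /mapP[u u_cx eq_X]]].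
    move: u_rem; rewrite mem_filter => /andP[/andP[u_s u_t] u_cx].
    by split; rewrite ?neq_image ?map_f.
  exists u => //; move: X_t X_s; rewrite eq_X !neq_image // => u_t u_s.
  by rewrite mem_filter u_s u_t.
Qed.

(* Whatever the greedy search returns is reached by collapses ([collapses_greedy]), so only
   its final complex has to be checked. *)
Definition free_pairs (keep : pred (seq E)) cx :=
  [seq p <- [seq (s, t) | s <- [seq s <- cx | ~~ keep s], t <- cx] | free_pairb cx p.1 p.2].

Fixpoint collapse_greedy k keep cx :=
  if k is k'.+1 then
    if free_pairs keep cx is (s, t) :: _ then collapse_greedy k' keep (remove_pair cx s t)
    else cx
  else cx.

Lemma collapses_greedy k keep cx : {subset cx <= subseqs es} ->
  collapses (complex_of cx) (complex_of (collapse_greedy k keep cx)).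
Proof.
elim: k cx => [|k IHk] cx cx_sub /=; first exact: collapses_refl.
case def_pairs: free_pairs => [|[s t] pairs]; first exact: collapses_refl.
have : (s, t) \in free_pairs keep cx by rewrite def_pairs mem_head.
rewrite mem_filter => /andP[free_st _].
apply: collapses_step (elementary_collapse_free_pair cx_sub free_st) (IHk _ _) => u.
by rewrite mem_filter => /andP[_ /cx_sub].
Qed.
End ImageSets.

(** * Morse matchings of complexes on 'I_n *)

Lemma disjoint_set2 (T : finType) (a b c d : T) :
  [disjoint [set a; b] & [set c; d]] = [&& a != c, a != d, b != c & b != d].
Proof. by rewrite disjoints_subset subUset !sub1set !inE !negb_or -!andbA. Qed.

Notation seq_hedge := (seq nat * seq nat)%type.

Definition hasse_seq (kb : pred (seq nat)) (x y : seq nat) : bool :=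
  [&& kb x, kb y, all (mem y) x, ~~ all (mem x) y & size y == (size x).+1].

Definition hasse_edges n kb : seq seq_hedge :=
  [seq p <- [seq (x, y) | x <- iota_subseqs n, y <- iota_subseqs n] | hasse_seq kb p.1 p.2].

Definition edge_of n (e : seq_hedge) : hedge 'I_n := (set_of_seq n e.1, set_of_seq n e.2).

Definition disjoint_edges (e e' : seq_hedge) : bool :=
  [&& e.1 != e'.1, e.1 != e'.2, e.2 != e'.1 & e.2 != e'.2].

Definition matchingb (w : seq seq_hedge) : bool :=
  all (fun e => all (fun e' => (e == e') || disjoint_edges e e') w) w.

Definition reversed_seq (es w : seq seq_hedge) : rel (seq nat) :=
  fun x y => ((x, y) \in es) && ((x, y) \notin w) || ((y, x) \in w).

Definition morse_matchings n kb : seq (seq seq_hedge) :=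
  let es := hasse_edges n kb in
  [seq w <- [seq w <- subseqs es | (w != [::]) && matchingb w]
     | rank_decreasing (reversed_seq es w) (iota_subseqs n)].

Definition acyclicity_certified n kb : bool :=
  let es := hasse_edges n kb in
  all (fun w => rank_decreasing (reversed_seq es w) (iota_subseqs n)
                || cycle_witnessed (reversed_seq es w) (iota_subseqs n))
      [seq w <- subseqs es | matchingb w].

Lemma morse_matchings_subseqs n kb : {subset morse_matchings n kb <= subseqs (hasse_edges n kb)}.
Proof. by move=> w; rewrite !mem_filter => /andP[_ /andP[]]. Qed.

Section MorseComplex.
Variables (n : nat) (K : {set {set 'I_n}}) (kb : pred (seq nat)).
Hypothesis memK : {in iota_subseqs n, forall x, (set_of_seq n x \in K) = kb x}.
Local Notation es := (hasse_edges n kb).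
Local Notation sos := (set_of_seq n).
Local Notation edges_of := (image_set (edge_of n)).

Lemma hasse_set_of_seq x y : x \in iota_subseqs n -> y \in iota_subseqs n ->
  hasse K (sos x) (sos y) = ((x, y) \in es).
Proof.
move=> x_in y_in; rewrite mem_filter allpairs_f // andbT /hasse_seq /hasse !memK //.
by rewrite /= properE !subset_set_of_seq // !card_set_of_seq // -andbA.
Qed.

Lemma hasse_edges_subseqs e : e \in es -> (e.1 \in iota_subseqs n) && (e.2 \in iota_subseqs n).
Proof. by rewrite mem_filter => /andP[_ /allpairsP[[x y] [x_in y_in ->]]]; apply/andP. Qed.

Lemma hasse_edges_uniq : uniq es.
Proof.
apply/filter_uniq/allpairs_uniq; rewrite ?subseqs_uniq ?iota_uniq //.
by move=> [? ?] [? ?].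
Qed.

Lemma edge_of_inj : {in es &, injective (edge_of n)}.
Proof.
move=> [x y] [x' y'] /hasse_edges_subseqs/andP[x_in y_in] /hasse_edges_subseqs/andP[x'_in y'_in].
by case=> /set_of_seq_inj-> // /set_of_seq_inj->.
Qed.

Lemma hasse_in_edges X Y : hasse K X Y -> (X, Y) \in map (edge_of n) es.
Proof.
rewrite -(seq_of_setK X) -(seq_of_setK Y) hasse_set_of_seq ?seq_of_set_subseqs //.
exact: map_f.
Qed.

Lemma mem_edges_of w x y : subseq w es -> x \in iota_subseqs n -> y \in iota_subseqs n ->
  ((sos x, sos y) \in edges_of w) = ((x, y) \in w).
Proof.
move=> /mem_subseq w_es x_in y_in; rewrite inE; apply/mapP/idP => [[e e_w] | xy_w]; last first.
  by exists (x, y).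
have /andP[e1_in e2_in] := hasse_edges_subseqs (w_es _ e_w).
by case=> /set_of_seq_inj-> // /set_of_seq_inj->; rewrite // -surjective_pairing.
Qed.

Lemma disjoint_edge_of e e' : e \in es -> e' \in es ->
  [disjoint [set (edge_of n e).1; (edge_of n e).2] & [set (edge_of n e').1; (edge_of n e').2]]
  = disjoint_edges e e'.
Proof.
move=> /hasse_edges_subseqs/andP[? ?] /hasse_edges_subseqs/andP[? ?].
by rewrite disjoint_set2 !(inj_in_eq (@set_of_seq_inj n)).
Qed.

Lemma matching_edges_of w : subseq w es -> matching K (edges_of w) = matchingb w.
Proof.
move=> /mem_subseq w_es; have hasse_w : [forall e in edges_of w, hasse K e.1 e.2].
  apply/forall_inP => E; rewrite inE => /mapP[e /w_es e_es ->].
  by have /andP[? ?] := hasse_edges_subseqs e_es; rewrite hasse_set_of_seq // -surjective_pairing.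
rewrite /matching hasse_w; apply/forall_inP/allP => [disj e e_w | disj E].
  apply/allP => e' e'_w; have := forall_inP (disj _ (image_set_f _ e_w)) _ (image_set_f _ e'_w).
  by rewrite (inj_in_eq edge_of_inj) ?disjoint_edge_of ?w_es // -implyNb.
rewrite inE => /mapP[e e_w ->]; apply/forall_inP => E'; rewrite inE => /mapP[e' e'_w ->].
have := allP (disj _ e_w) _ e'_w.
by rewrite (inj_in_eq edge_of_inj) ?disjoint_edge_of ?w_es // -implyNb.
Qed.

Lemma reversed_rel_edges_of w x y : subseq w es -> x \in iota_subseqs n -> y \in iota_subseqs n ->
  reversed_rel K (edges_of w) (sos x) (sos y) = reversed_seq es w x y.
Proof. by move=> w_es x_in y_in; rewrite /reversed_rel hasse_set_of_seq // !mem_edges_of. Qed.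

Hypothesis decided : acyclicity_certified n kb.

Lemma acyclic_edges_of w : subseq w es -> matchingb w ->
  ~~ has_dicycle (reversed_rel K (edges_of w))
  = rank_decreasing (reversed_seq es w) (iota_subseqs n).
Proof.
move=> w_es w_matching; apply: (acyclic_rankE (@seq_of_set_subseqs n) (@seq_of_setK n)).
  by move=> x y x_in y_in; apply: reversed_rel_edges_of.
by have := allP decided w; rewrite mem_filter mem_subseqs w_matching; apply.
Qed.

Lemma morse_complexE : morse_complex K = complex_of (edge_of n) (morse_matchings n kb).
Proof.
apply/setP => W; rewrite !inE /acyclic_matching; apply/idP/mapP.
  case/and3P=> W_nonempty W_matching W_acyclic.
  pose w := [seq e <- es | edge_of n e \in W]; have w_es : subseq w es by apply: filter_subseq.
  have W_w : W = edges_of w.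
    case/andP: W_matching => /forall_inP hasse_W _.
    apply/setP => -[X Y]; rewrite inE; apply/idP/mapP => [XY_W | [e]]; last first.
      by rewrite mem_filter => /andP[? _] ->.
    have /mapP[e e_es eq_XY] := hasse_in_edges (hasse_W _ XY_W).
    by exists e; rewrite // mem_filter -eq_XY XY_W.
  rewrite W_w matching_edges_of // in W_matching W_acyclic.
  exists w; rewrite // !mem_filter mem_subseqs w_es W_matching -acyclic_edges_of // W_acyclic.
  by rewrite !andbT; apply: contraNneq _ W_nonempty => w_nil; rewrite W_w w_nil /image_set set_nil.
case=> w; rewrite !mem_filter mem_subseqs => /and3P[w_rank /andP[w_nil w_matching] w_es] ->.
rewrite matching_edges_of // acyclic_edges_of // w_matching w_rank andbT.
by rewrite -card_gt0 (card_image_set hasse_edges_uniq edge_of_inj w_es) lt0n size_eq0 w_nil.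
Qed.
End MorseComplex.

(** * The triangle and its boundary *)

Definition Delta2_seqb (x : seq nat) : bool := x != [::].
Definition bDelta2_seqb (x : seq nat) : bool := (x != [::]) && (x != iota 0 3).

Lemma mem_Delta2 : {in iota_subseqs 3, forall x, (set_of_seq 3 x \in Delta2) = Delta2_seqb x}.
Proof.
move=> x x_in; rewrite inE -(set_of_seq_nil 3).
by rewrite (inj_in_eq (@set_of_seq_inj 3)) ?nil_iota_subseqs.
Qed.

Lemma mem_bDelta2 : {in iota_subseqs 3, forall x, (set_of_seq 3 x \in bDelta2) = bDelta2_seqb x}.
Proof.
move=> x x_in; rewrite inE -(set_of_seq_nil 3) -(set_of_seq_iota 3).
by rewrite !(inj_in_eq (@set_of_seq_inj 3)) ?nil_iota_subseqs ?iota_iota_subseqs.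
Qed.

Notation Delta2_matchings := (morse_matchings 3 Delta2_seqb).
Notation bDelta2_matchings := (morse_matchings 3 bDelta2_seqb).
Notation bDelta2_edges := (hasse_edges 3 bDelta2_seqb).

Lemma Delta2_certified : acyclicity_certified 3 Delta2_seqb.
Proof. by vm_compute. Qed.

Lemma bDelta2_certified : acyclicity_certified 3 bDelta2_seqb.
Proof. by vm_compute. Qed.

Lemma morse_matchings_sub : all (mem Delta2_matchings) bDelta2_matchings.
Proof. by vm_compute. Qed.

Lemma morse_matchings_collapse :
  perm_eq (collapse_greedy (size Delta2_matchings) (mem bDelta2_matchings) Delta2_matchings)
          bDelta2_matchings.
Proof. by vm_compute. Qed.

Lemma morse_Delta2E : morse_complex Delta2 = complex_of (edge_of 3) Delta2_matchings.
Proof. exact: morse_complexE mem_Delta2 Delta2_certified. Qed.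

Lemma morse_bDelta2E : morse_complex bDelta2 = complex_of (edge_of 3) bDelta2_matchings.
Proof. exact: morse_complexE mem_bDelta2 bDelta2_certified. Qed.

Lemma simplicial_complex_Delta2 : simplicial_complex Delta2.
Proof.
apply/andP; split; first by rewrite inE eqxx.
by apply/forall_inP => s _; apply/forallP => t; apply/implyP => /andP[t_nonempty _]; rewrite inE.
Qed.

Lemma simplicial_complex_bDelta2 : simplicial_complex bDelta2.
Proof.
apply/andP; split; first by rewrite inE eqxx.
apply/forall_inP => s; rewrite inE => /andP[_ s_proper]; apply/forallP => t.
apply/implyP => /andP[t_nonempty t_sub]; rewrite inE t_nonempty.
by apply: contraNneq s_proper => t_full; rewrite eqEsubset subsetT -t_full.
Qed.

Lemma morse_bDelta2_sub : morse_complex bDelta2 \subset morse_complex Delta2.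
Proof.
by rewrite morse_Delta2E morse_bDelta2E; apply/subset_complex_of/allP/morse_matchings_sub.
Qed.

Lemma morse_Delta2_collapses : collapses (morse_complex Delta2) (morse_complex bDelta2).
Proof.
have /(eq_complex_of (edge_of 3)) final_complex := perm_mem morse_matchings_collapse.
rewrite morse_Delta2E morse_bDelta2E -[X in collapses _ X]final_complex.
apply: collapses_greedy (@morse_matchings_subseqs 3 Delta2_seqb).
  exact: hasse_edges_uniq.
exact: edge_of_inj.
Qed.

(* [(i, false)] is the vertex [i] paired with the edge [{i, i+1}], and [(i, true)] the
   opposite pair on the hexagon. *)
Definition prism_vertex (x : 'I_3 * bool) : seq_hedge :=
  nth ([::], [::]) (if x.2 then [:: ([:: 2], [:: 1; 2]); ([:: 0], [:: 0; 2]); ([:: 1], [:: 0; 1])]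
                   else [:: ([:: 0], [:: 0; 1]); ([:: 1], [:: 1; 2]); ([:: 2], [:: 0; 2])]) x.1.

Definition prism_points : seq ('I_3 * bool) :=
  [seq (i, b) | i <- [:: @Ordinal 3 0 isT; @Ordinal 3 1 isT; @Ordinal 3 2 isT],
                b <- [:: false; true]].

Lemma mem_prism_points x : x \in prism_points.
Proof. by case: x => [[[|[|[|i]]] ?] []]. Qed.

Definition prism_lists : seq (seq ('I_3 * bool)) :=
  [seq [:: x] | x <- prism_points] ++
  [seq [:: x; y] | x <- prism_points, y <- [seq y <- prism_points | prism_edge x y]].

Lemma prism1E : prism1 = [set:: map (fun p => [set:: p]) prism_lists].
Proof.
apply/setP => S; rewrite /prism1 !in_set /prism_lists map_cat mem_cat; apply/orP/orP.
  case=> [/existsP[x /eqP->] | /existsP[x /existsP[y /andP[xy /eqP->]]]].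
    by left; apply/mapP; exists [:: x]; rewrite ?set_seq1 ?map_f ?mem_prism_points.
  right; apply/mapP; exists [:: x; y]; last by rewrite set_cons set_seq1.
  by apply: allpairs_f_dep; rewrite ?mem_filter ?xy ?mem_prism_points.
case=> /mapP[p]; [case/mapP => x _ -> -> | case/allpairsPdep => x [y [_ + ->]] ->].
  by left; apply/existsP; exists x; rewrite set_seq1.
by rewrite mem_filter => /andP[xy _]; right; apply/existsP; exists x; apply/existsP; exists y;
  rewrite xy set_cons set_seq1 eqxx.
Qed.

Lemma prism_vertex_inj : injective prism_vertex.
Proof.
have inj_points : all (fun x => all (fun y => (prism_vertex x == prism_vertex y) ==> (x == y))
                                  prism_points) prism_points by vm_compute.
move=> x y eq_xy; apply/eqP.
by have := allP (allP inj_points _ (mem_prism_points x)) _ (mem_prism_points y); rewrite eq_xy eqxx.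
Qed.

Lemma prism_vertex_edges : all (mem bDelta2_edges) (map prism_vertex prism_points).
Proof. by vm_compute. Qed.

Lemma prism_lists_perm :
  perm_eq bDelta2_matchings
    (undup [seq [seq e <- bDelta2_edges | e \in w] | w <- map (map prism_vertex) prism_lists]).
Proof. by vm_compute. Qed.

Lemma prism_image :
  [set (edge_of 3 \o prism_vertex) @: (S : {set 'I_3 * bool}) | S in prism1]
  = complex_of (edge_of 3) (map (map prism_vertex) prism_lists).
Proof.
apply/setP => X; rewrite prism1E mem_complex_of; apply/imsetP/mapP.
  case=> S; rewrite in_set => /mapP[p p_in ->] ->.
  by exists (map prism_vertex p); rewrite ?map_f // imset_set_seq /image_set map_comp.
case=> w /mapP[p p_in ->] ->.
by exists [set:: p]; rewrite ?in_set ?map_f // imset_set_seq /image_set map_comp.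
Qed.

Lemma prism_iso : simplicial_iso prism1 (morse_complex bDelta2).
Proof.
have pv_es x : prism_vertex x \in bDelta2_edges.
  exact: (allP prism_vertex_edges) (map_f _ (mem_prism_points x)).
exists (edge_of 3 \o prism_vertex); split.
  by move=> x y /(edge_of_inj (pv_es x) (pv_es y)) /prism_vertex_inj.
rewrite prism_image -(complex_of_filter (edge_of 3) (es := bDelta2_edges)); last first.
  by move=> _ /mapP[p _ ->] _ /mapP[x _ ->].
rewrite morse_bDelta2E; apply: eq_complex_of => w.
by rewrite (perm_mem prism_lists_perm w) mem_undup.
Qed.

Theorem mainTheorem9 :
  simplicial_complex Delta2 /\ simplicial_complex bDelta2 /\
  simplicial_iso prism1 (morse_complex bDelta2) /\
  morse_complex bDelta2 \subset morse_complex Delta2 /\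
  collapses (morse_complex Delta2) (morse_complex bDelta2).
Proof.
split; first exact: simplicial_complex_Delta2.
split; first exact: simplicial_complex_bDelta2.
split; first exact: prism_iso.
by split; [exact: morse_bDelta2_sub | exact: morse_Delta2_collapses].
Qed.
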